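(* Let $G=(X,\Sigma,\longrightarrow,X_0)$ and $R=(Z,\Sigma,\longrightarrow,Z_0)$ be automata. If $E$ is a $\Sigma_{ucr}$-controllability set from $G$ to $R$, then $\bigcup E$ is a $\Sigma_{ucr}$-simulation relation from $G$ to $R$.
   Context: An automaton is a 4-tuple $A=(Q,\Sigma,\longrightarrow,Q_0)$ with state set $Q$, finite event set $\Sigma$, ${\longrightarrow}\subseteq Q\times\Sigma\times Q$ and $\emptyset\neq Q_0\subseteq Q$; write $q\xrightarrow{\sigma}q'$ for $(q,\sigma,q')\in{\longrightarrow}$. Events are partitioned into uncontrollable $\Sigma_{uc}$ and controllable $\Sigma_c$; $\Sigma_r\subseteq\Sigma$ is a fixed set of required events. A relation $\Phi\subseteq X\times Z$ is a $\Sigma_{ucr}$-simulation from $G$ to $R$ if (initial state) every $x_0\in X_0$ has $z_0\in Z_0$ with $(x_0,z_0)\in\Phi$; ($\Sigma_{uc}$-forward) for $(x,z)\in\Phi$, $\sigma\in\Sigma_{uc}$, $x\xrightarrow{\sigma}x'$ there is $z'$ with $z\xrightarrow{\sigma}z'$ and $(x',z')\in\Phi$; ($\Sigma_r$-backward) for $(x,z)\in\Phi$, $\sigma\in\Sigma_r$, $z\xrightarrow{\sigma}z'$ there is $x'$ with $x\xrightarrow{\sigma}x'$ and $(x',z')\in\Phi$. For $W,W'\subseteq X\times Z$: $\mathit{match}_{G,R}(W,\sigma,W')$ iff for all $(x,z)\in W$ and $x\xrightarrow{\sigma}x'$ there is $z'$ with $z\xrightarrow{\sigma}z'$ and $(x',z')\in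 W'$. $E\subseteq\wp(X\times Z)$ is a $\Sigma_{ucr}$-controllability set from $G$ to $R$ if: (istate) some $W_0\in E$ satisfies $\forall x_0\in X_0\,\exists z_0\in Z_0\,((x_0,z_0)\in W_0)$; (a) for every $W\in E$, $\sigma\in\Sigma_{uc}$ there is $W'\in E$ with $\mathit{match}_{G,R}(W,\sigma,W')$; (b) for every $W\in E$, $(x,z)\in W$, $\sigma\in\Sigma_r$, $z\xrightarrow{\sigma}z'$, there exist $x'$, $W'\in E$ with $x\xrightarrow{\sigma}x'$, $(x',z')\in W'$, $\mathit{match}_{G,R}(W,\sigma,W')$. *)

From Stdlib Require Import List.

Record automaton (Q Sigma : Type) : Type := mkAutomaton {
  trans : Q -> Sigma -> Q -> Prop;
  init : Q -> Prop;
  init_nonempty : exists q0, init q0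
}.
Arguments trans {Q Sigma} _ _ _ _.
Arguments init {Q Sigma} _ _.

Definition finite_type (T : Type) : Prop := exists l : list T, forall x, In x l.

(* Sigma_ucr-simulation from G to R. [uc] = uncontrollable events, [req] = required events. *)
Definition ucr_simulation {X Z Sigma : Type} (uc req : Sigma -> Prop)
  (G : automaton X Sigma) (R : automaton Z Sigma) (Phi : X -> Z -> Prop) : Prop :=
  (forall x0, init G x0 -> exists z0, init R z0 /\ Phi x0 z0) /\
  (forall x z s x', Phi x z -> uc s -> trans G x s x' ->
     exists z', trans R z s z' /\ Phi x' z') /\
  (forall x z s z', Phi x z -> req s -> trans R z s z' ->
     exists x', trans G x s x' /\ Phi x' z').

Definition match_GR {X Z Sigma : Type} (G : automaton X Sigma) (R : automaton Z Sigma)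
  (W : X -> Z -> Prop) (s : Sigma) (W' : X -> Z -> Prop) : Prop :=
  forall x z x', W x z -> trans G x s x' -> exists z', trans R z s z' /\ W' x' z'.

Definition ucr_controllability_set {X Z Sigma : Type} (uc req : Sigma -> Prop)
  (G : automaton X Sigma) (R : automaton Z Sigma)
  (E : (X -> Z -> Prop) -> Prop) : Prop :=
  (exists W0, E W0 /\ forall x0, init G x0 -> exists z0, init R z0 /\ W0 x0 z0) /\
  (forall W s, E W -> uc s -> exists W', E W' /\ match_GR G R W s W') /\
  (forall W x z s z', E W -> W x z -> req s -> trans R z s z' ->
     exists x' W', trans G x s x' /\ E W' /\ W' x' z' /\ match_GR G R W s W').

Definition big_union {X Z : Type} (E : (X -> Z -> Prop) -> Prop) : X -> Z -> Prop :=
  fun x z => exists W, E W /\ W x z.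


(* Each clause of a controllability set yields the matching clause of a
   simulation for the union: a pair of the union lies in some member W of E,
   and the member W' supplied by the clause is contained in the union. *)

Section UnionOfControllabilitySet.

Variables (X Z Sigma : Type) (uc req : Sigma -> Prop).
Variables (G : automaton X Sigma) (R : automaton Z Sigma).
Variable E : (X -> Z -> Prop) -> Prop.

Lemma big_union_sub (W : X -> Z -> Prop) :
  E W -> forall x z, W x z -> big_union E x z.
Proof. intros HW x z Hxz. exists W. split; assumption. Qed.

Lemma match_GR_weaken (W : X -> Z -> Prop) (s : Sigma) (W' W'' : X -> Z -> Prop) :
  (forall x z, W' x z -> W'' x z) ->
  match_GR G R W s W' -> match_GR G R W s W''.
Proof.
  intros Hsub Hm x z x' Hxz Ht.
  destruct (Hm x z x' Hxz Ht) as [z' [Ht' Hw']].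
  exists z'. split; [exact Ht' | exact (Hsub x' z' Hw')].
Qed.

Lemma big_union_init :
  (exists W0, E W0 /\ forall x0, init G x0 -> exists z0, init R z0 /\ W0 x0 z0) ->
  forall x0, init G x0 -> exists z0, init R z0 /\ big_union E x0 z0.
Proof.
  intros [W0 [HW0 Hi]] x0 Hx0.
  destruct (Hi x0 Hx0) as [z0 [Hz0 Hw]].
  exists z0. split; [exact Hz0 | exact (big_union_sub W0 HW0 x0 z0 Hw)].
Qed.

Lemma big_union_uc_forward :
  (forall W s, E W -> uc s -> exists W', E W' /\ match_GR G R W s W') ->
  forall x z s x', big_union E x z -> uc s -> trans G x s x' ->
    exists z', trans R z s z' /\ big_union E x' z'.
Proof.
  intros Ha x z s x' [W [HW Hxz]] Hs Ht.
  destruct (Ha W s HW Hs) as [W' [HW' Hm]].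
  exact (match_GR_weaken W s W' (big_union E) (big_union_sub W' HW') Hm x z x' Hxz Ht).
Qed.

Lemma big_union_req_backward :
  (forall W x z s z', E W -> W x z -> req s -> trans R z s z' ->
     exists x' W', trans G x s x' /\ E W' /\ W' x' z' /\ match_GR G R W s W') ->
  forall x z s z', big_union E x z -> req s -> trans R z s z' ->
    exists x', trans G x s x' /\ big_union E x' z'.
Proof.
  intros Hb x z s z' [W [HW Hxz]] Hs Ht.
  destruct (Hb W x z s z' HW Hxz Hs Ht) as [x' [W' [Ht' [HW' [Hw' _]]]]].
  exists x'. split; [exact Ht' | exact (big_union_sub W' HW' x' z' Hw')].
Qed.

End UnionOfControllabilitySet.

Theorem mainTheorem7 (X Z Sigma : Type) (Sigma_fin : finite_type Sigma)
  (uc req : Sigma -> Prop)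
  (G : automaton X Sigma) (R : automaton Z Sigma)
  (E : (X -> Z -> Prop) -> Prop) :
  ucr_controllability_set uc req G R E ->
  ucr_simulation uc req G R (big_union E).
Proof.
  intros [Hinit [Huc Hreq]].
  split; [| split].
  - exact (big_union_init X Z Sigma G R E Hinit).
  - exact (big_union_uc_forward X Z Sigma uc G R E Huc).
  - exact (big_union_req_backward X Z Sigma req G R E Hreq).
Qed.
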